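(* Let $\mathfrak{h}$ be a Lie subalgebra of finite codimension in $\mathfrak{sl}_2(\mathbb{K}[\lambda])\cong\mathfrak{sl}_2(\mathbb{K})\otimes_{\mathbb{K}}\mathbb{K}[\lambda]$. Then every solvable ideal of $\mathfrak{h}$ is zero.
   Context: $\mathbb{K}$ is $\mathbb{C}$ or $\mathbb{R}$; $\mathbb{K}[\lambda]$ is the polynomial algebra in $\lambda$, and $\mathfrak{sl}_2(\mathbb{K}[\lambda])$ has bracket $[y_1\otimes f_1,y_2\otimes f_2]=[y_1,y_2]\otimes f_1f_2$. *)

(* K is R (an abstract realType) or its complexification R[i]. *)
From mathcomp Require Import all_boot all_algebra.
From mathcomp Require Export reals complex.
Set Implicit Arguments. Unset Strict Implicit. Unset Printing Implicit Defensive.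
Import GRing.Theory.
Local Open Scope ring_scope.

Section SL2Poly.
Variable K : fieldType.

(* It is a Lie algebra over K with bracket
   [x, y] = xy - yx (this agrees with [y1 (x) f1, y2 (x) f2] = [y1,y2] (x) f1 f2). *)
Definition mat := 'M[{poly K}]_2.

Definition in_sl2 (x : mat) : Prop := \tr x = 0.

Definition lie (x y : mat) : mat := x *m y - y *m x.

Definition kscale (c : K) (x : mat) : mat := c%:P *: x.

Definition is_subspace (S : mat -> Prop) : Prop :=
  [/\ (forall x, S x -> in_sl2 x), S 0,
      (forall x y, S x -> S y -> S (x + y)) &
      (forall (c : K) x, S x -> S (kscale c x))].

Definition lie_subalgebra (h : mat -> Prop) : Prop :=
  is_subspace h /\ (forall x y, h x -> h y -> h (lie x y)).

Definition finite_codim (h : mat -> Prop) : Prop :=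
  exists (n : nat) (v : 'I_n -> mat),
    (forall i, in_sl2 (v i)) /\
    (forall x, in_sl2 x -> exists c : 'I_n -> K,
         h (x - \sum_(i < n) kscale (c i) (v i))).

Definition lie_ideal (I h : mat -> Prop) : Prop :=
  [/\ is_subspace I, (forall x, I x -> h x) &
      (forall x y, h x -> I y -> I (lie x y))].

Definition bracket_span (A B : mat -> Prop) : mat -> Prop :=
  fun z => exists (n : nat) (c : 'I_n -> K) (a b : 'I_n -> mat),
    (forall i, A (a i) /\ B (b i)) /\
    z = \sum_(i < n) kscale (c i) (lie (a i) (b i)).

Definition derived (I : mat -> Prop) (k : nat) : mat -> Prop :=
  iter k (fun A => bracket_span A A) I.

Definition lie_solvable (I : mat -> Prop) : Prop :=
  exists k, forall x, derived I k x -> x = 0.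

Definition solvable_ideals_trivial : Prop :=
  forall h I : mat -> Prop,
    lie_subalgebra h -> finite_codim h ->
    lie_ideal I h -> lie_solvable I ->
    forall x, I x -> x = 0.

End SL2Poly.

From mathcomp Require Import all_boot all_algebra.
From mathcomp Require Import reals complex.
From mathcomp Require Import ring.
Set Implicit Arguments. Unset Strict Implicit. Unset Printing Implicit Defensive.
Import GRing.Theory Num.Theory.
Local Open Scope ring_scope.

(* Finite codimension gives, for every traceless x, a nonzero polynomial p
   with p x in h: the n+1 vectors x, λ x, ..., λ^n x are dependent modulo a
   complement of dimension n.  The derived series of an ideal I of h is stable
   under ad h, so for y in I^(m) the elements [p e, y] and [q f, y] lie in
   I^(m), where e, f are the standard nilpotent generators of sl_2.  If
   I^(m+1) = 0, then p [y, [e, y]] = q [y, [f, y]] = 0, and a direct 2x2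
   computation (valid when 2 is invertible) forces y = 0.  Descending along the
   derived series, I = 0. *)

Section LieBracket.
Variable K : fieldType.
Implicit Types x y z : mat K.

Lemma lieDr z x y : lie z (x + y) = lie z x + lie z y.
Proof. by rewrite /lie mulmxDl mulmxDr opprD addrACA. Qed.

Lemma lie0r z : lie z 0 = 0.
Proof. by rewrite /lie mulmx0 mul0mx subrr. Qed.

Lemma lieZr z (p : {poly K}) x : lie z (p *: x) = p *: lie z x.
Proof. by rewrite /lie scalerBr -scalemxAl -scalemxAr. Qed.

Lemma lieZl z (p : {poly K}) x : lie (p *: x) z = p *: lie x z.
Proof. by rewrite /lie scalerBr -scalemxAl -scalemxAr. Qed.

Lemma lie_sumr z n (F : 'I_n -> mat K) :
  lie z (\sum_(i < n) F i) = \sum_(i < n) lie z (F i).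
Proof. exact: (big_morph (lie z) (lieDr z) (lie0r z)). Qed.

Lemma lie_jacobi z x y : lie z (lie x y) = lie (lie z x) y + lie x (lie z y).
Proof.
rewrite /lie !mulmxBl !mulmxBr !mulmxA !opprB !addrA.
set A := z *m x *m y; set B := z *m y *m x; set C := x *m y *m z.
set D := y *m x *m z; set E := x *m z *m y; set F := y *m z *m x.
rewrite (addrAC (A - E + D)) (addrAC (A - E)) subrK (addrAC (A + D - F)) subrK.
by rewrite (addrAC (A + D)) (addrAC A).
Qed.

Lemma mxtrace_lie x y : \tr (lie x y) = 0.
Proof. by rewrite /lie linearB /= mxtrace_mulC subrr. Qed.

End LieBracket.

Section Subspaces.
Variable K : fieldType.
Implicit Types (S A B I h : mat K -> Prop) (x y z : mat K).

Lemma subspace_sum S n (c : 'I_n -> K) (w : 'I_n -> mat K) :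
  is_subspace S -> (forall i, S (w i)) -> S (\sum_(i < n) kscale (c i) (w i)).
Proof. by case=> _ S0 SD SZ Sw; apply: big_ind => // i _; apply: SZ. Qed.

Lemma bracket_span_lie A B x y : A x -> B y -> bracket_span A B (lie x y).
Proof.
move=> Ax By; exists 1%N, (fun=> 1), (fun=> x), (fun=> y); split=> //.
by rewrite big_ord1 /kscale scale1r.
Qed.

Lemma bracket_span_subspace A B : is_subspace (bracket_span A B).
Proof.
split.
- move=> _ [n [c [a [b [_ ->]]]]]; rewrite /in_sl2 raddf_sum big1 // => i _.
  by rewrite /= /kscale mxtraceZ mxtrace_lie mulr0.
- exists 0%N, (fun=> 0), (fun=> 0), (fun=> 0).
  by split=> [[]//|]; rewrite big_ord0.
- move=> _ _ [n1 [c1 [a1 [b1 [H1 ->]]]]] [n2 [c2 [a2 [b2 [H2 ->]]]]].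
  pose glue T (f1 : 'I_n1 -> T) (f2 : 'I_n2 -> T) i :=
    match split i with inl j => f1 j | inr j => f2 j end.
  exists (n1 + n2)%N, (glue _ c1 c2), (glue _ a1 a2), (glue _ b1 b2); split.
    by move=> i; rewrite /glue; case: (split i).
  by rewrite big_split_ord /glue; congr (_ + _); apply: eq_bigr => i _;
    rewrite ?(unsplitK (inl _ i)) ?(unsplitK (inr _ i)).
- move=> d _ [n [c [a [b [Hab ->]]]]].
  exists n, (fun i => d * c i), a, b; split=> //.
  by rewrite /kscale scaler_sumr; apply: eq_bigr => i _; rewrite scalerA polyCM.
Qed.

Lemma derived_subspace I m : is_subspace I -> is_subspace (derived I m).
Proof. by case: m => [|m] //= _; apply: bracket_span_subspace. Qed.

Lemma derived_lie_closed h I m x y :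
  (forall x y, h x -> I y -> I (lie x y)) ->
  h x -> derived I m y -> derived I m (lie x y).
Proof.
move=> hI; elim: m x y => [|m IHm] x y hx; first exact: hI.
move=> [n [c [a [b [Hab ->]]]]]; rewrite lie_sumr.
under eq_bigr => i _ do rewrite /kscale lieZr -/(kscale _ _).
apply: subspace_sum; first exact: bracket_span_subspace.
move=> i; have [Ia Ib] := Hab i.
have [_ _ spanD _] := bracket_span_subspace (derived I m) (derived I m).
by rewrite lie_jacobi; apply: spanD; apply: bracket_span_lie => //; exact: IHm.
Qed.

End Subspaces.

Lemma left_kernel_nonzero (F : fieldType) m n (M : 'M[F]_(m, n)) :
  (n < m)%N -> exists2 d : 'rV_m, d != 0 & d *m M = 0.
Proof.
move=> lt_nm; have : kermx M != 0.
  rewrite kermx_eq0 -row_leq_rank -ltnNge.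
  by rewrite (leq_trans _ lt_nm) ?ltnS ?rank_leq_col.
by case/rowV0Pn=> d /sub_kermxP dM d0; exists d.
Qed.

Lemma finite_codim_poly_multiple (K : fieldType) (h : mat K -> Prop) x :
  is_subspace h -> finite_codim h -> in_sl2 x ->
  exists2 p : {poly K}, p != 0 & h (p *: x).
Proof.
move=> hsub [n [v [_ hcodim]]] x_sl2.
have Xx_sl2 (j : 'I_n.+1) : in_sl2 ('X^j *: x).
  by rewrite /in_sl2 mxtraceZ x_sl2 mulr0.
have [C hC] := fin_all_exists (fun j => hcodim _ (Xx_sl2 j)).
have [d d0 dC] := left_kernel_nonzero (\matrix_(j, i) C j i) (ltnSn n).
exists (\poly_(j < n.+1) d 0 (inord j)).
  apply: contra_neq d0 => /polyP p0; apply/rowP => j.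
  by have := p0 j; rewrite coef_poly ltn_ord inord_val coef0 mxE.
have := subspace_sum (fun j => d 0 j) hsub hC; congr h.
rewrite /kscale; under eq_bigr do rewrite scalerBr scaler_sumr.
rewrite sumrB exchange_big /= [X in _ - X]big1 ?subr0.
  rewrite poly_def scaler_suml; apply: eq_bigr => j _.
  by rewrite scalerA mul_polyC inord_val.
move=> i _; under eq_bigr do rewrite scalerA -polyCM.
rewrite -scaler_suml -rmorph_sum.
suff -> : \sum_j d 0 j * C j i = 0 by rewrite rmorph0 scale0r.
by move/matrixP/(_ 0 i): dC; rewrite !mxE; under eq_bigr do rewrite mxE.
Qed.

Section TwoByTwo.
Variable R : comNzRingType.
Implicit Types A B : 'M[R]_2.

Let lift0_ord2 : lift ord0 ord0 = 1 :> 'I_2. Proof. exact: val_inj. Qed.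

Lemma mxtrace2 A : \tr A = A 0 0 + A 1 1.
Proof. by rewrite /mxtrace big_ord_recl big_ord1 lift0_ord2. Qed.

Lemma mulmx2 A B i j : (A *m B) i j = A i 0 * B 0 j + A i 1 * B 1 j.
Proof. by rewrite mxE big_ord_recl big_ord1 lift0_ord2. Qed.

Lemma matrix2_eq0 A : A 0 0 = 0 -> A 0 1 = 0 -> A 1 0 = 0 -> A 1 1 = 0 -> A = 0.
Proof.
have ord2 (i : 'I_2) : i = 0 \/ i = 1.
  by case: i => [[|[|//]] ?]; [left | right]; apply: val_inj.
move=> A00 A01 A10 A11; apply/matrixP => i j; rewrite mxE.
by case: (ord2 i) => ->; case: (ord2 j) => ->.
Qed.

End TwoByTwo.

Lemma sl2_eq0_of_lie_lie_delta (K : fieldType) (y : mat K) :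
  (2%:R : K) != 0 -> in_sl2 y ->
  lie y (lie (delta_mx 0 1) y) = 0 -> lie y (lie (delta_mx 1 0) y) = 0 -> y = 0.
Proof.
rewrite /in_sl2 mxtrace2 /lie => two_neq0 y_tr0 /matrixP Ey1 /matrixP/(_ 0 1).
have sqr_eq0 k (p : {poly K}) : 2%:R ^+ k * (p * p) = 0 -> p = 0.
  move/eqP; rewrite -polyC_natr !mulf_eq0 expf_eq0 polyC_eq0 (negbTE two_neq0).
  by rewrite andbF orbb => /eqP.
move: (Ey1 1 0) (Ey1 0 1); rewrite !(mulmx2, mxE) /=.
set a := y 0 0; set b := y 0 1; set c := y 1 0; set d := y 1 1.
have d_eq : d = - a by apply: (addrI a); rewrite y_tr0 subrr.
(* E10 : 2 c^2 = 0,  E01 : -4 a^2 - 2 b c = 0,  F01 : 2 b^2 = 0. *)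
rewrite d_eq => E10 E01 F01.
have c0 : c = 0 by apply: (sqr_eq0 1%N); rewrite -E10; ring.
have b0 : b = 0 by apply: (sqr_eq0 1%N); rewrite -F01; ring.
have a0 : a = 0 by apply: (sqr_eq0 2%N); rewrite -oppr0 -E01 b0 c0; ring.
apply: matrix2_eq0; [exact: a0 | exact: b0 | exact: c0 |].
by rewrite -/d d_eq a0 oppr0.
Qed.

Section SolvableIdeal.
Variables (K : fieldType) (h I : mat K -> Prop).
Hypotheses (two_neq0 : (2%:R : K) != 0) (h_sub : lie_subalgebra h)
  (h_codim : finite_codim h) (I_ideal : lie_ideal I h).

Lemma derived_eq0_of_derivedS_eq0 m :
  (forall x, derived I m.+1 x -> x = 0) -> forall y, derived I m y -> y = 0.
Proof.
have [I_subspace _ I_lie] := I_ideal.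
move=> derived_eq0 y Ym; have [Im_sl2 _ _ _] := derived_subspace m I_subspace.
have lie_lie_eq0 e : in_sl2 e -> lie y (lie e y) = 0.
  move=> e_sl2.
  have [p p_neq0 hpe] := finite_codim_poly_multiple h_sub.1 h_codim e_sl2.
  have := derived_eq0 _ (bracket_span_lie Ym (derived_lie_closed I_lie hpe Ym)).
  by rewrite lieZl lieZr => /eqP; rewrite scalemx_eq0 (negbTE p_neq0) => /eqP.
apply: sl2_eq0_of_lie_lie_delta (Im_sl2 _ Ym) _ _ => //;
  by apply: lie_lie_eq0; rewrite /in_sl2 mxtrace2 !mxE /= addr0.
Qed.

End SolvableIdeal.

Lemma solvable_ideals_trivial_char_neq2 (K : fieldType) :
  (2%:R : K) != 0 -> solvable_ideals_trivial K.
Proof.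
move=> two_neq0 h I h_sub h_codim I_ideal [k derived_eq0].
elim: k derived_eq0 => [|k IHk] derived_eq0; first exact: derived_eq0.
exact/IHk/(derived_eq0_of_derivedS_eq0 two_neq0 h_sub h_codim I_ideal).
Qed.

Theorem lemma6p2 (R : realType) :
  solvable_ideals_trivial R /\ solvable_ideals_trivial R[i].
Proof.
by split; apply: solvable_ideals_trivial_char_neq2; rewrite pnatr_eq0.
Qed.
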